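(* Let $(\mathcal{F}_\alpha)_{\alpha<\omega_1}$ and $(\mathcal{G}_\alpha)_{\alpha<\omega_1}$ be transfinite families defined by two approximating families. Let $\mathcal{A}\subset[\mathbb{N}]^{<\infty}$ be hereditary, $P\subset\mathbb{N}$ infinite and $\alpha<\omega_1$. Then $\mathcal{A}$ is $\alpha$-large on $P$ with respect to $(\mathcal{F}_\beta)$ if and only if $\mathcal{A}$ is $\alpha$-large on $P$ with respect to $(\mathcal{G}_\beta)$.
   Context: An approximating family assigns to each countable limit ordinal $\alpha$ finite sets $A_n(\alpha)\subset[0,\alpha)$, $n\in\mathbb{N}$, with $A_n(\alpha)\subset A_{n+1}(\alpha)$ and $\lim_n\max A_n(\alpha)=\alpha$. The associated transfinite family: $\mathcal{F}_0=\{\emptyset\}$; $\mathcal{F}_{\beta+1}=\{\{n\}\cup E:n\in\mathbb{N},E\in\mathcal{F}_\beta\}\cup\{\emptyset\}$; for limit $\alpha$, $\mathcal{F}_\alpha=\{\emptyset\}\cup\{E\ne\emptyset:E\in\bigcup_{\beta\in A_{\min E}(\alpha)}\mathcal{F}_\beta\}$. For $N=\{n_1<n_2<\dots\}$, $\mathcal{F}^N=\{\{n_i:i\in E\}:E\in\mathcal{F}\}$. $\mathcal{A}$ is $\alpha$-large on $P$ with respect to $(\mathcal{F}_\beta)$ if for every infinite $M\subset P$ there is an infinite $N\subset M$ with $\mathcal{F}_\alpha^N\subset\mathcal{A}$. $[\mathbb{N}]^{<\infty}$ = finite subsets of $\mathbb{N}$; hereditary = closed under subsets. *)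

From Stdlib Require List.
From mathcomp Require Import all_boot.
From mathcomp Require Import finmap.
Set Implicit Arguments. Unset Strict Implicit. Unset Printing Implicit Defensive.
Open Scope fset_scope.

(* Countable ordinals: an abstract well-ordered type in which every element has
   countably many predecessors (i.e. a type order-isomorphic to an initial
   segment of omega_1).  Quantifying over all such types is equivalent to
   quantifying over alpha < omega_1. *)
Definition countable_wellorder (O : Type) (lt : O -> O -> Prop) : Prop :=
  well_founded lt /\
  (forall a b c, lt a b -> lt b c -> lt a c) /\
  (forall a b, lt a b \/ a = b \/ lt b a) /\
  (forall a, exists f : nat -> O, forall b, lt b a -> exists n, f n = b).

Definition is_zero (O : Type) (lt : O -> O -> Prop) (a : O) : Prop :=
  forall b, ~ lt b a.

Definition is_succ_of (O : Type) (lt : O -> O -> Prop) (a b : O) : Prop :=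
  lt b a /\ forall c, lt b c -> lt c a -> False.

Definition is_limit (O : Type) (lt : O -> O -> Prop) (a : O) : Prop :=
  (exists b, lt b a) /\ (forall b, lt b a -> exists c, lt b c /\ lt c a).

Definition approximating_family (O : Type) (lt : O -> O -> Prop)
    (A : O -> nat -> seq O) : Prop :=
  forall a, is_limit lt a ->
    (forall n b, List.In b (A a n) -> lt b a) /\
    (forall n b, List.In b (A a n) -> List.In b (A a n.+1)) /\
    (forall b, lt b a -> exists N, forall n, N <= n ->
        exists c, List.In c (A a n) /\ lt b c).

Definition transfinite_family (O : Type) (lt : O -> O -> Prop)
    (A : O -> nat -> seq O) (F : O -> {fset nat} -> Prop) : Prop :=
  (forall a, is_zero lt a -> forall E, F a E <-> E = fset0) /\
  (forall a b, is_succ_of lt a b -> forall E,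
      F a E <-> (E = fset0 \/ exists n E', F b E' /\ E = n |` E')) /\
  (forall a, is_limit lt a -> forall E,
      F a E <-> (E = fset0 \/
        exists m, m \in E /\ (forall x, x \in E -> m <= x) /\
          exists b, List.In b (A a m) /\ F b E)).

Definition hereditary (Acal : {fset nat} -> Prop) : Prop :=
  forall E E', Acal E -> E' `<=` E -> Acal E'.

Definition infinite_set (P : nat -> Prop) : Prop :=
  forall k, exists n, k <= n /\ P n.

(* Infinite subsets of nat are given by their increasing enumerations. *)
Definition strictly_increasing (m : nat -> nat) : Prop :=
  forall i j, i < j -> m i < m j.

Definition spread (n : nat -> nat) (F : {fset nat} -> Prop) (E : {fset nat}) : Prop :=
  exists E0, F E0 /\ E = [fset n i | i in E0].

Definition large (O : Type) (F : O -> {fset nat} -> Prop) (a : O)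
    (Acal : {fset nat} -> Prop) (P : nat -> Prop) : Prop :=
  forall m : nat -> nat, strictly_increasing m -> (forall i, P (m i)) ->
    exists n : nat -> nat, strictly_increasing n /\
      (forall i, exists j, n i = m j) /\
      (forall E, spread n (F a) E -> Acal E).

From mathcomp Require Import all_boot.
From mathcomp Require Import finmap.
From Stdlib Require Import Classical ClassicalEpsilon.
Set Implicit Arguments. Unset Strict Implicit. Unset Printing Implicit Defensive.
Local Open Scope nat_scope.

(* By transfinite induction on a, for any two transfinite families F and G there
   is k0 such that every G_a set spread by an increasing k dominating k0
   pointwise is an F_a set.  At a limit a, a set E of G_a with min E = m lies in
   G_b for some b in AG_m(a); since b < a, F_b sets with large enough elements
   are F_c sets for some c that lies in AF_n(a) for all large n.  Summing the
   finitely many thresholds over b in AG_i(a) gives k0 i.  Given k0, thinning an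
   F-witness of largeness along an increasing k above k0 gives a G-witness. *)

Definition spreads_into (O : Type) (F G : O -> {fset nat} -> Prop) (a : O)
    (k0 : nat -> nat) : Prop :=
  forall k, strictly_increasing k -> forall E, G a E ->
    (forall x, x \in E -> k0 x <= k x) -> F a [fset k i | i in E].

Definition above (p : nat) (E : {fset nat}) : Prop := forall x, x \in E -> p <= x.

Lemma zero_succ_or_limit (O : Type) (lt : O -> O -> Prop) a :
  is_zero lt a \/ (exists b, is_succ_of lt a b) \/ is_limit lt a.
Proof.
case: (classic (exists b, lt b a)) => [[b0 b0a]|no_pred]; last first.
  by left => b ba; apply: no_pred; exists b.
case: (classic (exists b, is_succ_of lt a b)) => [succ|not_succ]; first by right; left.
right; right; split; first by exists b0.
move=> b ba; apply: NNPP => no_between; apply: not_succ; exists b; split => // c bc ca.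
by apply: no_between; exists c.
Qed.

Lemma choice_on (X Y : Type) (R : X -> Y -> Prop) (y0 : Y) :
  exists f : X -> Y, forall x, (exists y, R x y) -> R x (f x).
Proof. by exists (fun x => epsilon (inhabits y0) (R x)) => x; apply: epsilon_spec. Qed.

Lemma sumn_map_ge (T : Type) (f : T -> nat) (s : seq T) y :
  List.In y s -> f y <= sumn (map f s).
Proof.
elim: s => [//|x s IHs] /= [->|ys]; first exact: leq_addr.
exact: leq_trans (IHs ys) (leq_addl _ _).
Qed.

Lemma exists_increasing_above (k0 : nat -> nat) :
  exists k, strictly_increasing k /\ forall i, k0 i <= k i.
Proof.
pose k := fix k i := if i is i'.+1 then k i' + k0 i + 1 else k0 0.
have k_succ i : k i < k i.+1 by rewrite /= addn1 ltnS leq_addr.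
exists k; split; first exact: homo_ltn ltn_trans k_succ.
by case=> [|i] //=; rewrite addnAC leq_addl.
Qed.

Lemma large_of_spreads_into (O : Type) (F G : O -> {fset nat} -> Prop) a k0
    Acal P :
  spreads_into F G a k0 -> large F a Acal P -> large G a Acal P.
Proof.
move=> k0F Flarge m m_incr Pm.
have [n [n_incr [n_sub nA]]] := Flarge m m_incr Pm.
have [k [k_incr k0k]] := exists_increasing_above k0.
exists (n \o k); split; [|split].
- by move=> i j ij; apply/n_incr/k_incr.
- by move=> i; apply: n_sub.
- move=> _ [E [GE ->]]; apply: nA; exists [fset k i | i in E].
  split; first by apply: k0F => // x _.
  by rewrite -imfset_comp.
Qed.

Section TransfiniteFamilies.

Variables (O : Type) (lt : O -> O -> Prop).
Hypothesis lt_wf : well_founded lt.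
Hypothesis lt_total : forall a b, lt a b \/ a = b \/ lt b a.

Lemma approx_In_mono A a c N :
  approximating_family lt A -> is_limit lt a ->
  List.In c (A a N) -> forall n, N <= n -> List.In c (A a n).
Proof.
move=> hA a_lim cN n Nn.
apply: (homo_leq (r := fun s t => forall x, List.In x s -> List.In x t)) Nn _ cN.
- by [].
- by move=> s t u st tu x /st /tu.
- exact: (hA a a_lim).2.1.
Qed.

Lemma approx_eventually_above A a b :
  approximating_family lt A -> is_limit lt a -> lt b a ->
  exists N c, [/\ lt b c, lt c a & forall n, N <= n -> List.In c (A a n)].
Proof.
move=> hA a_lim ba; have [A_lt [_ A_cof]] := hA a a_lim.
have [N hN] := A_cof b ba; have [c [cN bc]] := hN N (leqnn N).
exists N, c; split; [by [] | exact: A_lt cN | exact: approx_In_mono hA a_lim cN].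
Qed.

Section OneFamily.

Variables (A : O -> nat -> seq O) (F : O -> {fset nat} -> Prop).
Hypothesis hA : approximating_family lt A.
Hypothesis hF : transfinite_family lt A F.

Lemma transfinite_succ_sub g d E : is_succ_of lt g d -> F d E -> F g E.
Proof.
move=> gd FdE; apply/(hF.2.1 _ _ gd).
case: (E =P fset0) => [->|/eqP/fset0Pn [x xE]]; first by left.
by right; exists x, E; rewrite mem_fset1U.
Qed.

Lemma transfinite_limit_intro a c p E :
  is_limit lt a -> (forall n, p <= n -> List.In c (A a n)) ->
  F c E -> above p E -> F a E.
Proof.
move=> a_lim cA FcE pE; apply/(hF.2.2 a a_lim).
case: (E =P fset0) => [->|/eqP/fset0Pn [x xE]]; first by left.
have [m mE m_min] := ex_minnP (ex_intro (fun n => n \in E) x xE).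
by right; exists m; do 2!split => //; exists c; split; [apply: cA; apply: pE|].
Qed.

Lemma transfinite_tail_sub g b :
  lt b g -> exists p, forall E, F b E -> above p E -> F g E.
Proof.
elim/(well_founded_ind lt_wf): g b => g IHg b bg.
case: (zero_succ_or_limit lt g) => [g_zero|[[d gd]|g_lim]].
- by case: (g_zero b).
- case: (lt_total b d) => [bd|[->|db]].
  + have [p hp] := IHg d gd.1 b bd.
    by exists p => E FbE pE; apply/(transfinite_succ_sub gd)/hp.
  + by exists 0 => E FbE _; apply: transfinite_succ_sub gd FbE.
  + by case: (gd.2 b db bg).
- have [N [c [bc cg cA]]] := approx_eventually_above hA g_lim bg.
  have [p hp] := IHg c cg b bc.
  exists (maxn p N) => E FbE pNE.
  have FcE : F c E by apply: hp FbE _ => x /pNE; rewrite geq_max => /andP [].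
  apply: transfinite_limit_intro g_lim _ FcE pNE.
  by move=> n; rewrite geq_max => /andP [_ /cA].
Qed.

Lemma transfinite_limit_absorbs a b :
  is_limit lt a -> lt b a -> exists p c,
    (forall n, p <= n -> List.In c (A a n)) /\
    (forall E, F b E -> above p E -> F c E).
Proof.
move=> a_lim ba.
have [N [c [bc _ cA]]] := approx_eventually_above hA a_lim ba.
have [p hp] := transfinite_tail_sub bc.
exists (maxn p N), c; split; first by move=> n; rewrite geq_max => /andP [_ /cA].
by move=> E FbE pNE; apply: hp FbE _ => x /pNE; rewrite geq_max => /andP [].
Qed.

End OneFamily.

Section TwoFamilies.

Variables (AF AG : O -> nat -> seq O) (F G : O -> {fset nat} -> Prop).
Hypotheses (hAF : approximating_family lt AF) (hAG : approximating_family lt AG).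
Hypotheses (hF : transfinite_family lt AF F) (hG : transfinite_family lt AG G).

Lemma spreads_into_zero a : is_zero lt a -> spreads_into F G a (fun _ => 0).
Proof.
move=> a_zero k _ E /(hG.1 a a_zero) -> _.
by apply/(hF.1 a a_zero); rewrite imfset0.
Qed.

Lemma spreads_into_succ a d k0 :
  is_succ_of lt a d -> spreads_into F G d k0 -> spreads_into F G a k0.
Proof.
move=> ad k0d k k_incr E /(hG.2.1 _ _ ad) [->|[n [E' [GdE' ->]]]] k0k.
  by apply/(hF.2.1 _ _ ad); left; rewrite imfset0.
apply/(hF.2.1 _ _ ad); right; exists (k n), [fset k i | i in E'].
split; last by rewrite imfsetU1.
by apply: k0d => // x xE'; apply: k0k; rewrite fset1Ur.
Qed.

Lemma spreads_into_limit a : is_limit lt a ->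
  (forall b, lt b a -> exists k0, spreads_into F G b k0) ->
  exists k0, spreads_into F G a k0.
Proof.
move=> a_lim IH.
have [kb kbP] := choice_on (spreads_into F G) (fun _ => 0).
have [pc pcP] := choice_on (fun b (pc : nat * O) =>
  (forall n, pc.1 <= n -> List.In pc.2 (AF a n)) /\
  (forall E, F b E -> above pc.1 E -> F pc.2 E)) (0, a).
exists (fun i => sumn [seq kb b i + (pc b).1 | b <- AG a i]).
move=> k k_incr E /(hG.2.2 a a_lim) [->|[m [mE [m_min [b [bA GbE]]]]]] k0k.
  by apply/(hF.2.2 a a_lim); left; rewrite imfset0.
have ba : lt b a := (hAG a_lim).1 m b bA.
have [pcA pcF] : (forall n, (pc b).1 <= n -> List.In (pc b).2 (AF a n)) /\
    (forall E, F b E -> above (pc b).1 E -> F (pc b).2 E).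
  by apply: pcP; have [p [c ?]] := transfinite_limit_absorbs hAF hF a_lim ba; exists (p, c).
have k_above x : x \in E -> kb b x + (pc b).1 <= k x.
  move=> xE; apply: leq_trans (k0k x xE).
  apply: (sumn_map_ge (fun b => kb b x + (pc b).1)).
  exact: approx_In_mono hAG a_lim bA _ (m_min x xE).
have kE_above : above (pc b).1 [fset k i | i in E].
  by move=> _ /imfsetP [x xE ->]; apply: leq_trans (k_above x xE); apply: leq_addl.
have FbkE : F b [fset k i | i in E].
  apply: (kbP b (IH b ba) k k_incr E GbE) => x xE.
  by apply: leq_trans (k_above x xE); apply: leq_addr.
exact (transfinite_limit_intro hF a_lim pcA (pcF _ FbkE kE_above) kE_above).
Qed.

Lemma exists_spreads_into a : exists k0, spreads_into F G a k0.
Proof.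
elim/(well_founded_ind lt_wf): a => a IH.
case: (zero_succ_or_limit lt a) => [a_zero|[[d ad]|a_lim]].
- by exists (fun _ => 0); apply: spreads_into_zero.
- by have [k0 k0d] := IH d ad.1; exists k0; apply: spreads_into_succ ad k0d.
- exact: spreads_into_limit.
Qed.

End TwoFamilies.

End TransfiniteFamilies.

Theorem corollary4p3 (O : Type) (lt : O -> O -> Prop)
  (hO : countable_wellorder lt)
  (AF AG : O -> nat -> seq O)
  (hAF : approximating_family lt AF) (hAG : approximating_family lt AG)
  (F G : O -> {fset nat} -> Prop)
  (hF : transfinite_family lt AF F) (hG : transfinite_family lt AG G)
  (Acal : {fset nat} -> Prop) (hA : hereditary Acal)
  (P : nat -> Prop) (hP : infinite_set P) (a : O) :
  large F a Acal P <-> large G a Acal P.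
Proof.
have [lt_wf [_ [lt_total _]]] := hO.
have [kFG kFGP] := exists_spreads_into lt_wf lt_total hAF hAG hF hG a.
have [kGF kGFP] := exists_spreads_into lt_wf lt_total hAG hAF hG hF a.
by split; [apply: large_of_spreads_into kFGP | apply: large_of_spreads_into kGFP].
Qed.
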